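(* Let $w\in\mathcal L_n$ have a valid step $q$ in $\mathcal L$. If for some $1\le i<j\le q$ one has $(w^{q\ast2})_{[i,i+n-1]}=(w^{q\ast 2})_{[j,j+n-1]}$, then $j-i$ is a valid step for $w$ in $\mathcal L$. Consequently, if $q$ is the minimal step for $w$, the words $(w^{q\ast 2})_{[i,i+n-1]}$, $1\le i\le q$, are pairwise distinct.
   Context: $\mathcal L$ is a language over a finite alphabet $\mathcal A$ (nonempty finite words, containing $\mathcal A$, closed under subwords, every word extendable on both sides), $\mathcal L_n$ its words of length $n$. For $n\ge 2$, $w\in\mathcal A^n$ and integer $1\le q\le n/2$ with $w_{[q+1,n]}=w_{[1,n-q]}$, $w^{q\ast r}$ is the word of length $n+(r-1)q$ with $(w^{q\ast r})_{[q(i-1)+1,q(i-1)+n]}=w$ for $1\le i\le r$; $q$ is a valid step for $w$ in $\mathcal L$ if moreover $w^{q\ast 2}\in\mathcal L$. The minimal step is the least valid step. *)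

From mathcomp Require Import all_boot.
Set Implicit Arguments. Unset Strict Implicit. Unset Printing Implicit Defensive.

Definition is_language (A : finType) (L : seq A -> Prop) : Prop :=
  [/\ (forall w, L w -> 0 < size w),
      (forall a : A, L [:: a]),
      (forall u x v, L (u ++ x ++ v) -> 0 < size x -> L x)
    & (forall w, L w -> exists a b : A, L (a :: w ++ [:: b]))].

(* 1-indexed factor w_[i,j] (i <= j) *)
Definition subword (A : Type) (w : seq A) (i j : nat) : seq A :=
  take (j.+1 - i) (drop i.-1 w).

(* w^{q*r}: r-1 copies of the prefix of length q followed by w; when
   w_[q+1,n] = w_[1,n-q] this is the word of length n+(r-1)q all of whose
   windows at positions q(i-1)+1, 1<=i<=r, are equal to w. *)
Definition qpow (A : Type) (w : seq A) (q r : nat) : seq A :=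
  flatten (nseq r.-1 (take q w)) ++ w.

Definition valid_step (A : Type) (L : seq A -> Prop) (w : seq A) (q : nat) : Prop :=
  [/\ 1 <= q, q <= (size w)./2,
      subword w q.+1 (size w) = subword w 1 (size w - q)
    & L (qpow w q 2)].

Definition minimal_step (A : Type) (L : seq A -> Prop) (w : seq A) (q : nat) : Prop :=
  valid_step L w q /\ (forall q', valid_step L w q' -> q <= q').

From mathcomp Require Import all_boot.
From mathcomp Require Import zify.

Set Implicit Arguments.
Unset Strict Implicit.
Unset Printing Implicit Defensive.

(* A valid step q makes w q-periodic, so w and its square
   W := w^{q*2} are both restrictions of one q-periodic function
   f k := w_(k mod q) on nat.  If two windows of length n >= q of W, at
   offsets i < j <= q, coincide, then f(m) = f(m + (j - i)) holds on a whole
   window of length >= q, hence (by q-periodicity) for every m: f is also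
   (j-i)-periodic.  Therefore w has period p := j - i, and w^{p*2} is the
   prefix of length n + p of W, a factor of a word of L, hence in L. *)

Section PeriodicFunctions.
Variables (A : Type) (f : nat -> A) (q : nat).
Hypothesis f_periodic : forall m, f (m + q) = f m.

Lemma periodic_addM m c : f (m + c * q) = f m.
Proof. by elim: c => [|c IHc]; rewrite ?addn0 // mulSnr addnA f_periodic. Qed.

(* If f(m) = f(m + p) on a window of length at least q, then p is a period of
   f everywhere: every m is congruent mod q to a point of the window. *)
Lemma window_period n a p : 0 < q <= n ->
  (forall k, k < n -> f (a + k) = f (a + k + p)) -> forall m, f (m + p) = f m.
Proof.
move=> /andP[q_gt0 le_qn] window m.
pose t := m + a * q - a.
have shift : m + a * q = a + t %% q + t %/ q * q.
  have le_a_aq : a <= a * q by rewrite leq_pmulr.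
  by rewrite -addnA [t %% q + _]addnC -divn_eq /t; lia.
have win := window (t %% q) (leq_trans (ltn_pmod t q_gt0) le_qn).
rewrite -(periodic_addM (m + p) a) -(periodic_addM m a) addnAC shift.
by rewrite addnAC !periodic_addM win.
Qed.

End PeriodicFunctions.

Section PeriodicWords.
Variables (A : Type) (x0 : A).

Definition has_period (w : seq A) (p : nat) : Prop :=
  forall k, k + p < size w -> nth x0 w (k + p) = nth x0 w k.

Lemma has_periodP w p : p <= size w ->
  has_period w p <-> subword w p.+1 (size w) = subword w 1 (size w - p).
Proof.
move=> le_pw; rewrite /subword subSS subn1 /= drop0.
have size_eq : size (take (size w - p) (drop p w)) = size (take (size w - p) w).
  by rewrite !size_take size_drop ltnn; case: ltnP; lia.
split=> [per | eq_sub k lt_k].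
  apply: (eq_from_nth (x0 := x0) size_eq) => k.
  rewrite size_take size_drop ltnn => lt_k.
  rewrite !nth_take ?nth_drop 1?addnC ?per //; lia.
have := congr1 (nth x0 ^~ k) eq_sub.
by rewrite !nth_take ?nth_drop 1?addnC //; lia.
Qed.

Lemma nth_mod_period w p : 0 < p -> has_period w p ->
  forall k, k < size w -> nth x0 w k = nth x0 w (k %% p).
Proof.
move=> p_gt0 per k; elim/ltn_ind: k => k IHk lt_k.
case: (ltnP k p) => [lt_kp | le_pk]; first by rewrite modn_small.
rewrite -(subnK le_pk) modnDr per ?subnK //; apply: IHk; lia.
Qed.

Lemma size_qpow2 (w : seq A) q : q <= size w -> size (qpow w q 2) = q + size w.
Proof. by move=> le_qw; rewrite /qpow /= cats0 size_cat size_take_min (minn_idPl le_qw). Qed.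

Lemma nth_qpow2 (f : nat -> A) (w : seq A) q : q <= size w -> (forall m, f (m + q) = f m) ->
  (forall k, k < size w -> nth x0 w k = f k) ->
  forall k, k < size w + q -> nth x0 (qpow w q 2) k = f k.
Proof.
move=> le_qw f_per w_f k lt_k; rewrite /qpow /= cats0 nth_cat size_take_min.
rewrite (minn_idPl le_qw); case: ltnP => [lt_kq | le_qk].
  by rewrite nth_take // w_f //; lia.
rewrite w_f; last by lia.
by rewrite -f_per subnK.
Qed.

Lemma nth_subword (s : seq A) i m k : 1 <= i -> k < m -> i - 1 + k < size s ->
  nth x0 (subword s i (i + m - 1)) k = nth x0 s (i - 1 + k).
Proof.
move=> i_ge1 lt_km lt_s; rewrite /subword nth_take; last by lia.
by rewrite nth_drop -subn1.
Qed.

End PeriodicWords.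

Lemma language_prefix (A : finType) (L : seq A -> Prop) s m :
  is_language L -> L s -> 0 < m <= size s -> L (take m s).
Proof.
move=> [_ _ factor_closed _] Ls /andP[m_gt0 le_ms].
apply: (factor_closed [::] _ (drop m s)); first by rewrite /= cat_take_drop.
by rewrite size_takel.
Qed.

Lemma step_of_equal_windows (A : finType) (L : seq A -> Prop) (w : seq A) q i j :
  is_language L -> valid_step L w q -> 1 <= i -> i < j -> j <= q ->
  subword (qpow w q 2) i (i + size w - 1) = subword (qpow w q 2) j (j + size w - 1) ->
  valid_step L w (j - i).
Proof.
move=> langL [q_ge1 le_q_half border LW] i_ge1 lt_ij le_jq eq_windows.
have x0 : A.
  by move: le_q_half; case: (w) => [/= ? | x _ _]; [exfalso; lia | exact: x].
have le_2q : q.*2 <= size w by rewrite -geq_half_double.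
have le_qw : q <= size w by lia.
set n := size w in le_2q le_qw border eq_windows *.
set p := j - i; set f := fun k => nth x0 w (k %% q).
have f_perq m : f (m + q) = f m by rewrite /f modnDr.
have w_f k : k < n -> nth x0 w k = f k.
  by apply: nth_mod_period; [lia | apply/(has_periodP x0 le_qw)].
have W_f := nth_qpow2 le_qw f_perq w_f.
have size_W : size (qpow w q 2) = q + n by rewrite size_qpow2.
have f_perp m : f (m + p) = f m.
  apply: (window_period f_perq (n := n) (a := i - 1)); first by lia.
  move=> k lt_kn; have := congr1 (nth x0 ^~ k) eq_windows.
  rewrite !nth_subword ?size_W; try lia.
  rewrite !W_f; try lia.
  by rewrite (_ : j - 1 + k = i - 1 + k + p) //; lia.
have per_p : has_period x0 w p.
  move=> k lt_k; rewrite (w_f (k + p)) // (w_f k); [exact: f_perp | lia].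
have le_pw : p <= n by lia.
split; [lia | by rewrite geq_half_double; lia | by apply/(has_periodP x0 le_pw) |].
have -> : qpow w p 2 = take (n + p) (qpow w q 2).
  apply: (eq_from_nth (x0 := x0)) => [|k].
    by rewrite size_qpow2 // size_takel ?size_W; lia.
  rewrite size_qpow2 // => lt_k.
  rewrite nth_take; last by lia.
  rewrite W_f; last by lia.
  rewrite (nth_qpow2 le_pw f_perp w_f) //; lia.
by apply: (language_prefix langL LW); rewrite size_W; lia.
Qed.

(* Second part: a coincidence of two windows at offsets <= q would give a
   valid step smaller than the minimal one. *)
Theorem mainTheorem12 (A : finType) (L : seq A -> Prop) (n : nat) (w : seq A) (q : nat) :
  is_language L -> 2 <= n -> size w = n -> L w -> valid_step L w q ->
  (forall i j, 1 <= i -> i < j -> j <= q ->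
     subword (qpow w q 2) i (i + n - 1) = subword (qpow w q 2) j (j + n - 1) ->
     valid_step L w (j - i)) /\
  (minimal_step L w q ->
     forall i j, 1 <= i <= q -> 1 <= j <= q -> i != j ->
       subword (qpow w q 2) i (i + n - 1) != subword (qpow w q 2) j (j + n - 1)).
Proof.
move=> langL _ <- _ step_q.
have steps i j := @step_of_equal_windows A L w q i j langL step_q.
split=> // [[_ minimal]] i j /andP[i_ge1 le_iq] /andP[j_ge1 le_jq] neq_ij.
apply/eqP => eq_windows; case: (ltngtP i j) => [lt_ij | lt_ji | eq_ij].
- by have := minimal _ (steps i j i_ge1 lt_ij le_jq eq_windows); lia.
- by have := minimal _ (steps j i j_ge1 lt_ji le_iq (esym eq_windows)); lia.
- by rewrite eq_ij eqxx in neq_ij.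
Qed.
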